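(* Let $\Phi=(A;A^*;\{E_i\}_{i=0}^d;\{E^*_i\}_{i=0}^d)$ be a Leonard system in $\mathcal A$, with scalars $x_i$ and polynomials $p_i$ as defined below. Then $x_1,\dots,x_d$ are nonzero and $$E^*_i=\frac{p_i(A)E^*_0p_i(A)}{x_1x_2\cdots x_i}\qquad(0\le i\le d).$$
   Context: Let $\mathbb K$ be a field, $d\ge 0$ an integer, and $\mathcal A$ a $\mathbb K$-algebra isomorphic to $\mathrm{Mat}_{d+1}(\mathbb K)$, with identity $I$ and trace $\mathrm{tr}$. An element $A\in\mathcal A$ is multiplicity-free if it has $d+1$ mutually distinct eigenvalues in $\mathbb K$; if $\theta_0,\dots,\theta_d$ is an ordering of them, the primitive idempotent of $A$ associated with $\theta_i$ is $E_i=\prod_{j\ne i}(A-\theta_jI)/(\theta_i-\theta_j)$. A Leonard system in $\mathcal A$ is a sequence $\Phi=(A;A^*;\{E_i\}_{i=0}^d;\{E^*_i\}_{i=0}^d)$ such that: (i) $A,A^*$ are multiplicity-free; (ii) $E_0,\dots,E_d$ is an ordering of the primitive idempotents of $A$; (iii) $E^*_0,\dots,E^*_d$ is an ordering of those of $A^*$; (iv) $E_iA^*E_j=0$ if $|i-j|>1$ and $\ne0$ if $|i-j|=1$ $(0\le i,j\le d)$; (v) $E^*_iAE^*_j=0$ if $|i-j|>1$ and $\neq0$ if $|i-j|=1$ $(0\le i,j\le d)$. Define $a_i=\mathrm{tr}(E^*_iA)$ $(0\le i\le d)$, $x_i=\mathrm{tr}(E^*_iAE^*_{i-1}A)$ $(1\le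 i\le d)$, $x_0=0$, and polynomials $p_0,\dots,p_{d+1}\in\mathbb K[\lambda]$ by $p_0=1$, $p_{-1}=0$, $\lambda p_i=p_{i+1}+a_ip_i+x_ip_{i-1}$ $(0\le i\le d)$. The empty product $x_1\cdots x_0$ equals $1$. *)

From HB Require Import structures.
From mathcomp Require Import all_boot all_order all_algebra.
Set Implicit Arguments. Unset Strict Implicit. Unset Printing Implicit Defensive.
Import Order.TTheory GRing.Theory Num.Theory.
Local Open Scope ring_scope.

(* The algebra A ~ Mat_{d+1}(K) is taken to be 'M[K]_(d.+1) itself;
   its trace is the matrix trace \tr. *)

Section Leonard.
Variables (K : fieldType) (d : nat).
Notation MA := 'M[K]_(d.+1).

Definition eigen_ordering (A : MA) (th : 'I_(d.+1) -> K) : Prop :=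
  injective th /\ forall i, eigenvalue A (th i).

Definition mult_free (A : MA) : Prop := exists th, eigen_ordering A th.

Definition prim_idem (A : MA) (th : 'I_(d.+1) -> K) (i : 'I_(d.+1)) : MA :=
  \prod_(j < d.+1 | j != i) ((th i - th j)^-1 *: (A - (th j)%:M)).

Definition idem_ordering (A : MA) (E : 'I_(d.+1) -> MA) : Prop :=
  exists th, eigen_ordering A th /\ forall i, E i = prim_idem A th i.

Definition tridiag (E : 'I_(d.+1) -> MA) (B : MA) : Prop :=
  forall i j : 'I_(d.+1),
    ((i.+1 < j)%N \/ (j.+1 < i)%N -> E i *m B *m E j = 0) /\
    ((i.+1 == j)%N \/ (j.+1 == i)%N -> E i *m B *m E j != 0).

Definition leonard_system (A As : MA) (E Es : 'I_(d.+1) -> MA) : Prop :=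
  mult_free A /\ mult_free As /\ idem_ordering A E /\ idem_ordering As Es /\
  tridiag E As /\ tridiag Es A.

Definition LS_a (A : MA) (Es : 'I_(d.+1) -> MA) (n : nat) : K :=
  \tr (Es (inord n) *m A).

Definition LS_x (A : MA) (Es : 'I_(d.+1) -> MA) (n : nat) : K :=
  if n is k.+1 then \tr (Es (inord n) *m A *m Es (inord k) *m A) else 0.

(* pair (p_n, p_{n-1}), with p_0 = 1, p_{-1} = 0,
   p_{i+1} = (lambda - a_i) p_i - x_i p_{i-1} *)
Fixpoint LS_pp (A : MA) (Es : 'I_(d.+1) -> MA) (n : nat) : {poly K} * {poly K} :=
  match n with
  | 0 => (1, 0)
  | k.+1 => let (pk, pk1) := LS_pp A Es k in
            (('X - (LS_a A Es k)%:P) * pk - (LS_x A Es k) *: pk1, pk)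
  end.

Definition LS_p (A : MA) (Es : 'I_(d.+1) -> MA) (n : nat) : {poly K} :=
  (LS_pp A Es n).1.

End Leonard.

From HB Require Import structures.
From mathcomp Require Import all_boot all_order all_algebra zify.

(* The E*_i are the primitive idempotents of the multiplicity-free A*, hence
   rank-one idempotents summing to I: E*_i X E*_i = tr(E*_i X) E*_i, and
   B E*_i C is nonzero as soon as B E*_i and E*_i C are.  Tridiagonality of A
   with respect to the E*_i makes the words E*_i A E*_{i-1} A ... A E*_0 obey
   the three-term recurrence of the p_i, so they equal p_i(A) E*_0; likewise
   E*_0 p_i(A) = E*_0 A E*_1 ... A E*_i.  Collapsing the product of the two
   words from the middle with the sandwich identity leaves x_1 ... x_i E*_i. *)

Set Implicit Arguments.
Unset Strict Implicit.
Unset Printing Implicit Defensive.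
Import GRing.Theory.
Local Open Scope ring_scope.

Section OuterProduct.
Variables (K : fieldType) (n : nat).
Implicit Types (c : 'cV[K]_n) (r : 'rV[K]_n).

Lemma outer_prod_neq0 p q (c : 'cV[K]_p) (r : 'rV[K]_q) :
  c != 0 -> r != 0 -> c *m r != 0.
Proof.
move=> /cV0Pn[i ci] /rV0Pn[j rj]; apply/matrix0Pn; exists i, j.
by rewrite !mxE big_ord1 mulf_neq0.
Qed.

Lemma outer_prod_sandwich c r (X : 'M[K]_n) :
  c *m r *m X *m (c *m r) = \tr (c *m r *m X) *: (c *m r).
Proof.
have -> : c *m r *m X *m (c *m r) = c *m (r *m X *m c) *m r by rewrite !mulmxA.
rewrite -(mulmxA c r X) mxtrace_mulC {1}[r *m X *m c]mx11_scalar mul_mx_scalar.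
by rewrite -scalemxAl /mxtrace big_ord1.
Qed.

Lemma mulmx_outer_prod_neq0 p q c r (B : 'M[K]_(p, n)) (C : 'M[K]_(n, q)) :
  B *m (c *m r) != 0 -> c *m r *m C != 0 -> B *m (c *m r) *m C != 0.
Proof.
rewrite mulmxA -(mulmxA c) -(mulmxA (B *m c)) => Bc_nz rC_nz.
apply: outer_prod_neq0.
  by apply: contraNneq Bc_nz => ->; rewrite mul0mx.
by apply: contraNneq rC_nz => ->; rewrite mulmx0.
Qed.

End OuterProduct.

Section PrimitiveIdempotents.
Variables (K : fieldType) (d : nat).
Local Notation MA := 'M[K]_d.+1.
Implicit Types (A : MA) (th : 'I_d.+1 -> K).

Lemma eigenvector_prim_idem A th k (v : 'rV_d.+1) a :
  v *m A = a *: v ->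
  v *m prim_idem A th k =
  (\prod_(j < d.+1 | j != k) ((th k - th j)^-1 * (a - th j))) *: v.
Proof.
move=> vA; apply: (big_ind2 (fun (M : MA) c => v *m M = c *: v)).
- by rewrite mulmx1 scale1r.
- move=> M1 c1 M2 c2 vM1 vM2.
  by rewrite -mulmxE mulmxA vM1 -scalemxAl vM2 scalerA mulrC.
- move=> j _.
  by rewrite -scalemxAr mulmxBr vA mul_mx_scalar -scalerBl scalerA.
Qed.

Lemma eigenvector_prim_idem_delta A th j k (v : 'rV_d.+1) :
  injective th -> v *m A = th j *: v ->
  v *m prim_idem A th k = (j == k)%:R *: v.
Proof.
move=> th_inj vA; rewrite (eigenvector_prim_idem th k vA).
have [->|jk] := eqVneq j k.
  rewrite big1 ?scale1r // => l lk; rewrite mulVf // subr_eq0.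
  by apply: contra_neq lk => /th_inj.
by rewrite (bigD1 j jk) /= subrr mulr0 mul0r scale0r.
Qed.

Lemma prim_idem_diagonalize A th : eigen_ordering A th ->
  exists2 V : MA, V \in unitmx &
    forall k, prim_idem A th k = invmx V *m delta_mx k k *m V.
Proof.
case=> th_inj th_eig.
have /all_sig2[v vA v_nz] :
    forall j, {v : 'rV_d.+1 | v *m A == th j *: v & v != 0}.
  by move=> j; apply: sig2W; have /eigenvalueP[v /eqP] := th_eig j; exists v.
pose V : MA := \matrix_j v j.
have VE k : V *m prim_idem A th k = delta_mx k k *m V.
  apply/row_matrixP => j; rewrite !row_mul rowK.
  rewrite (eigenvector_prim_idem_delta _ th_inj (eqP (vA j))).
  rewrite rowE mul_delta_mx_cond -scaler_nat.
  by have [->|_] := eqVneq j k; rewrite -scalemxAl -rowE rowK ?scale0r.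
have V_unit : V \in unitmx.
  rewrite -row_free_unit; apply: inj_row_free => c cV0; apply/rowP => i.
  have /eqP := congr1 (mulmx^~ (prim_idem A th i)) cV0.
  rewrite mul0mx -mulmxA VE -(mul_delta_mx (0 : 'I_1)) !mulmxA -colE.
  rewrite -mulmxA -rowE rowK [col i c]mx11_scalar mul_scalar_mx.
  by rewrite scaler_eq0 (negPf (v_nz i)) orbF !mxE => /eqP.
exists V => // k.
by rewrite -mulmxA -VE mulmxA mulVmx // mul1mx.
Qed.

Lemma idem_ordering_rank_one A (E : 'I_d.+1 -> MA) : idem_ordering A E ->
  [/\ forall i, E i *m E i = E i, \sum_i E i = 1%:M &
      forall i, exists (c : 'cV_d.+1) (r : 'rV_d.+1), E i = c *m r].
Proof.
case=> th [/prim_idem_diagonalize[V V_unit VE] E_prim].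
have E_V i : E i = invmx V *m delta_mx i i *m V by rewrite E_prim VE.
split.
- move=> i; rewrite E_V -!mulmxA [V *m _]mulmxA mulmxA mulmxV // mul1mx.
  by rewrite !mulmxA; congr (_ *m _); rewrite -mulmxA mul_delta_mx.
- under eq_bigr do rewrite E_V.
  by rewrite -mulmx_suml -mulmx_sumr -mx1_sum_delta mulmx1 mulVmx.
- move=> i; rewrite E_V; exists (invmx V *m delta_mx i 0), (delta_mx 0 i *m V).
  by rewrite mulmxA -(mulmxA _ _ (delta_mx 0 i)) mul_delta_mx.
Qed.

End PrimitiveIdempotents.

Lemma big_nat_tridiag (V : zmodType) (G : nat -> V) d i : (i < d)%N ->
  (forall j, (j <= d)%N -> (i.+1 < j)%N \/ (j.+1 < i)%N -> G j = 0) ->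
  \sum_(0 <= j < d.+1) G j = G i.+1 + G i + (if i is k.+1 then G k else 0).
Proof.
move=> lt_id G_far.
rewrite (big_cat_nat (p := d.+1) (leq0n i.+2) lt_id) /=.
rewrite [X in _ + X]big1_seq ?addr0; last first.
  by move=> j; rewrite mem_index_iota => /andP[j1 j2]; apply: G_far; lia.
rewrite !big_nat_recr //= -addrA addrC; congr (_ + _); first exact: addrC.
case: i lt_id G_far => [|k] lt_kd G_far; first by rewrite big_geq.
rewrite big_nat_recr //= big1_seq ?add0r // => j.
by rewrite mem_index_iota => /andP[_ j2]; apply: G_far; lia.
Qed.

Section LeonardRecurrence.
Variables (K : fieldType) (d : nat).
Local Notation MA := 'M[K]_d.+1.
Variables (A : MA) (Es : 'I_d.+1 -> MA).
Hypothesis Es_idem : forall i, Es i *m Es i = Es i.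
Hypothesis Es_sum : \sum_i Es i = 1%:M.
Hypothesis Es_rank_one :
  forall i, exists (c : 'cV_d.+1) (r : 'rV_d.+1), Es i = c *m r.
Hypothesis Es_tridiag : tridiag Es A.

Local Notation E k := (Es (inord k)).
Local Notation a := (LS_a A Es).
Local Notation x := (LS_x A Es).

Lemma Es_sandwich i X : Es i *m X *m Es i = \tr (Es i *m X) *: Es i.
Proof. by have [c [r ->]] := Es_rank_one i; apply: outer_prod_sandwich. Qed.

Lemma mulmx_Es_neq0 i m p (B : 'M_(m, d.+1)) (C : 'M_(d.+1, p)) :
  B *m Es i != 0 -> Es i *m C != 0 -> B *m Es i *m C != 0.
Proof. by have [c [r ->]] := Es_rank_one i; apply: mulmx_outer_prod_neq0. Qed.

Lemma sum_E : \sum_(0 <= j < d.+1) E j = 1%:M.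
Proof.
by rewrite big_mkord -Es_sum; apply: eq_bigr => j _; rewrite inord_val.
Qed.

Lemma E_A_E_far i j : (i <= d)%N -> (j <= d)%N ->
  (i.+1 < j)%N \/ (j.+1 < i)%N -> E i *m A *m E j = 0.
Proof.
move=> le_id le_jd far.
by apply: (Es_tridiag (inord i) (inord j)).1; rewrite !inordK.
Qed.

Lemma E_A_E_adj_neq0 k : (k < d)%N ->
  E k *m A *m E k.+1 != 0 /\ E k.+1 *m A *m E k != 0.
Proof.
move=> lt_kd; split.
  apply: (Es_tridiag (inord k) (inord k.+1)).2.
  by left; rewrite !inordK //; lia.
by apply: (Es_tridiag (inord k.+1) (inord k)).2; right; rewrite !inordK //; lia.
Qed.

Lemma E_A_E k : E k *m A *m E k = a k *: E k.
Proof. exact: Es_sandwich. Qed.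

Lemma E_A_E_A_E k : E k *m A *m E k.+1 *m A *m E k = x k.+1 *: E k.
Proof.
rewrite -(mulmxA (E k *m A)) -(mulmxA (E k)) Es_sandwich; congr (_ *: _).
by rewrite !mulmxA -(mulmxA (E k *m A)) mxtrace_mulC !mulmxA.
Qed.

Fixpoint walk_down k := if k is k'.+1 then E k *m A *m walk_down k' else E 0.
Definition walk_down_prev k := if k is k'.+1 then walk_down k' else 0.
Fixpoint walk_up k := if k is k'.+1 then walk_up k' *m A *m E k else E 0.
Definition walk_up_prev k := if k is k'.+1 then walk_up k' else 0.

Lemma E_walk_down i : E i *m walk_down i = walk_down i.
Proof. by case: i => [|k] /=; rewrite ?Es_idem // !mulmxA Es_idem. Qed.

Lemma walk_up_E i : walk_up i *m E i = walk_up i.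
Proof. by case: i => [|k] /=; rewrite ?Es_idem // -!mulmxA Es_idem. Qed.

Lemma A_walk_down i : (i < d)%N ->
  A *m walk_down i =
  walk_down i.+1 + a i *: walk_down i + x i *: walk_down_prev i.
Proof.
move=> lt_id; rewrite -[A *m _]mul1mx -sum_E mulmx_suml.
rewrite (big_nat_tridiag (G := fun j => E j *m (A *m walk_down i)) lt_id);
  last by move=> j ? ?; rewrite -E_walk_down !mulmxA E_A_E_far ?mul0mx //; lia.
rewrite /= mulmxA; congr (_ + _ + _).
  by rewrite -{1}E_walk_down !mulmxA E_A_E -scalemxAl E_walk_down.
case: i lt_id => [|k] lt_kd /=; first by rewrite scale0r.
by rewrite -E_walk_down !mulmxA E_A_E_A_E -scalemxAl E_walk_down.
Qed.

Lemma walk_up_A i : (i < d)%N ->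
  walk_up i *m A = walk_up i.+1 + a i *: walk_up i + x i *: walk_up_prev i.
Proof.
move=> lt_id; rewrite -[walk_up i *m A]mulmx1 -sum_E mulmx_sumr.
rewrite (big_nat_tridiag (G := fun j => walk_up i *m A *m E j) lt_id);
  last by move=> j ? ?; rewrite -walk_up_E -!mulmxA (mulmxA (E i)) E_A_E_far
    ?mul0mx ?mulmx0 //; lia.
rewrite /=; congr (_ + _ + _).
  by rewrite -{1}walk_up_E -!mulmxA (mulmxA (E i)) E_A_E -scalemxAr walk_up_E.
case: i lt_id => [|k] lt_kd /=; first by rewrite scale0r.
rewrite -walk_up_E -!mulmxA (mulmxA (E k)) (mulmxA (E k *m A)).
rewrite (mulmxA (E k *m A *m E k.+1)).
by rewrite E_A_E_A_E -scalemxAr walk_up_E /LS_x !mulmxA.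
Qed.

Lemma horner_LS_pp_mul_E0 i : (i <= d)%N ->
  horner_mx A (LS_pp A Es i).1 *m E 0 = walk_down i /\
  horner_mx A (LS_pp A Es i).2 *m E 0 = walk_down_prev i.
Proof.
elim: i => [|i IH] le_id /=; first by rewrite rmorph1 rmorph0 mul1mx mul0mx.
have := IH (ltnW le_id); case: (LS_pp A Es i) => p q /= [pE0 qE0]; split=> //.
rewrite rmorphB rmorphM /= linearZ /= rmorphB /= horner_mx_X horner_mx_C.
rewrite -mulmxE (mulmxBl (_ *m _)) -mulmxA pE0 -scalemxAl qE0.
rewrite mulmxBl mul_scalar_mx.
by rewrite A_walk_down // addrAC !addrK.
Qed.

Lemma E0_mul_horner_LS_pp i : (i <= d)%N ->
  E 0 *m horner_mx A (LS_pp A Es i).1 = walk_up i /\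
  E 0 *m horner_mx A (LS_pp A Es i).2 = walk_up_prev i.
Proof.
elim: i => [|i IH] le_id /=; first by rewrite rmorph1 rmorph0 mulmx1 mulmx0.
have := IH (ltnW le_id); case: (LS_pp A Es i) => p q /= [E0p E0q]; split=> //.
rewrite mulrC rmorphB rmorphM /= linearZ /= rmorphB /= horner_mx_X horner_mx_C.
rewrite -mulmxE (mulmxBr _ (_ *m _)) mulmxA E0p -scalemxAr E0q.
rewrite mulmxBr mul_mx_scalar.
by rewrite {1}walk_up_A // addrAC !addrK.
Qed.

Lemma walk_down_mul_up i : (i <= d)%N ->
  walk_down i *m walk_up i = (\prod_(1 <= k < i.+1) x k) *: E i.
Proof.
elim: i => [|i IH] le_id /=; first by rewrite Es_idem big_geq // scale1r.
rewrite !mulmxA -(mulmxA _ (walk_down i)).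
rewrite -(mulmxA _ (walk_down i *m walk_up i)).
rewrite -(mulmxA (E i.+1 *m A)) IH 1?ltnW // -!scalemxAl -scalemxAr.
rewrite !mulmxA -(mulmxA (E i.+1)) -(mulmxA (E i.+1)) Es_sandwich.
rewrite (big_nat_recr i.+1) //= scalerA; congr (_ *: _); congr (_ * _).
by rewrite /LS_x !mulmxA.
Qed.

(* x_{k+1} = 0 would kill E*_k A E*_{k+1} A E*_k, a product through the
   rank-one E*_{k+1} of two nonzero factors. *)
Lemma LS_x_neq0 k : (1 <= k <= d)%N -> x k != 0.
Proof.
case: k => // k /andP[_ lt_kd]; apply/eqP => x0.
have [EAE1_nz E1AE_nz] := E_A_E_adj_neq0 lt_kd.
rewrite -mulmxA in E1AE_nz.
move: (mulmx_Es_neq0 EAE1_nz E1AE_nz).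
by rewrite mulmxA E_A_E_A_E x0 scale0r eqxx.
Qed.

Lemma Es_LS_p_sandwich (i : 'I_d.+1) :
  Es i = (\prod_(1 <= k < i.+1) x k)^-1 *:
         (horner_mx A (LS_p A Es i) *m Es ord0 *m horner_mx A (LS_p A Es i)).
Proof.
have le_id : (i <= d)%N by rewrite -ltnS.
have [pE0 _] := horner_LS_pp_mul_E0 le_id.
have [E0p _] := E0_mul_horner_LS_pp le_id.
have prod_nz : \prod_(1 <= k < i.+1) x k != 0.
  rewrite prodf_seq_neq0; apply/allP => k /[!mem_index_iota] k_range.
  by apply/implyP => _; apply: LS_x_neq0; lia.
have E0E0 : Es ord0 = E 0 *m E 0 by rewrite Es_idem -[ord0]inord_val.
rewrite E0E0 mulmxA -(mulmxA _ (E 0)) /LS_p pE0 E0p.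
by rewrite walk_down_mul_up // scalerA mulVf // scale1r inord_val.
Qed.

End LeonardRecurrence.

Theorem theorem8p6 (K : fieldType) (d : nat) (A As : 'M[K]_(d.+1))
    (E Es : 'I_(d.+1) -> 'M[K]_(d.+1)) :
  leonard_system A As E Es ->
  (forall i : nat, (1 <= i <= d)%N -> LS_x A Es i != 0) /\
  (forall i : 'I_(d.+1),
     Es i = (\prod_(1 <= k < i.+1) LS_x A Es k)^-1 *:
            (horner_mx A (LS_p A Es i) *m Es ord0 *m horner_mx A (LS_p A Es i))).
Proof.
case=> _ [_ [_ [Es_ord [_ Es_tridiag]]]].
have [Es_idem Es_sum Es_rank_one] := idem_ordering_rank_one Es_ord.
split; first exact: LS_x_neq0 Es_rank_one Es_tridiag.
exact: Es_LS_p_sandwich Es_idem Es_sum Es_rank_one Es_tridiag.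
Qed.
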